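(* Let $\mathcal{C}$ be a conjugacy class of $S_n$ whose elements have $c_j$ $j$-cycles for each $j$, let $2\leq d\leq n$, and let $k\geq1$ with $c_1\geq 2kd$. Let $\mathcal{C}'$ be the conjugacy class of $S_n$ whose elements have $c_1-kd$ fixed points, $c_d+k$ cycles of length $d$, and $c_j$ cycles of length $j$ for every other $j$. Then \[ \frac{|\mathcal{C}|}{|\mathcal{C}'|}\leq\frac{(c_d+k)^kd^k}{(kd)^{kd}}\leq\left(\frac{n}{(kd)^d}\right)^k. \] *)

From mathcomp Require Import all_boot all_order all_algebra all_fingroup.
Set Implicit Arguments. Unset Strict Implicit. Unset Printing Implicit Defensive.

(* Number of j-cycles of a permutation s of {0,..,n-1}; fixed points are
   the 1-cycles (porbits includes singleton orbits). *)
Definition cyc_count (n : nat) (s : 'S_n) (j : nat) : nat :=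
  #|[set X in porbits s | #|X| == j]|.

From mathcomp Require Import all_boot all_order all_algebra all_fingroup.
From mathcomp Require Import zify.
Set Implicit Arguments. Unset Strict Implicit. Unset Printing Implicit Defensive.
Import GRing.Theory Num.Theory.

(* Double counting.  Let P be the set of pairs (t, x) with t in C and x an
   injective labelling of k*d fixed points of t by 'I_k * 'I_d, so that
   |P| = |C| * c_1 (c_1 - 1) ... (c_1 - kd + 1) >= |C| (kd)^(kd) when
   c_1 >= 2kd.  Closing each block x(b, 0), ..., x(b, d-1) into a d-cycle
   turns t into a permutation with the cycle counts of C', hence into an
   element of C', since equal cycle counts force conjugacy; remembering only the k points x(b, 0), each on a d-cycle of
   the result, still determines (t, x).  There are at most
   |C'| (d (c_d + k))^k such data, and d (c_d + k) <= n. *)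

Lemma weight_preserving_injection (aT : finType) (w : aT -> nat) (A B : {set aT}) :
    (forall j, #|[set a in A | w a == j]| = #|[set b in B | w b == j]|) ->
  exists f : aT -> aT, [/\ {in A &, injective f}, {in A, forall a, f a \in B}
                         & {in A, forall a, w (f a) = w a}].
Proof.
move=> eq_fibres.
pose fibre (C : {set aT}) a := enum [set c in C | w c == w a].
have size_fibre a : size (fibre B a) = size (fibre A a).
  by rewrite -!cardE eq_fibres.
have mem_fibre a : a \in A -> a \in fibre A a by rewrite mem_enum !inE eqxx => ->.
pose f a := nth a (fibre B a) (index a (fibre A a)).
have f_fibre a : a \in A -> f a \in fibre B a.
  by move=> Aa; rewrite mem_nth // size_fibre index_mem mem_fibre.
have f_weight a : a \in A -> w (f a) = w a.
  by move/f_fibre; rewrite mem_enum inE => /andP [_ /eqP].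
exists f; split=> [a a' Aa Aa' eq_f|a /f_fibre|//]; last first.
  by rewrite mem_enum inE => /andP [].
have eq_w : w a' = w a by rewrite -(f_weight a') // -eq_f f_weight.
have Aa'_fibre : a' \in fibre A a by rewrite mem_enum !inE Aa' eq_w eqxx.
move: eq_f; rewrite /f /fibre eq_w -/(fibre B a) -/(fibre A a).
rewrite [nth a' _ _](set_nth_default a) ?size_fibre ?index_mem //.
move/eqP; rewrite nth_uniq ?enum_uniq ?size_fibre ?index_mem ?mem_fibre //.
by move=> /eqP eq_i; rewrite -(nth_index a (mem_fibre a Aa)) eq_i nth_index.
Qed.

Section CycleCounts.
Variable T : finType.
Implicit Types (t u : {perm T}) (x y : T) (X : {set T}).

Definition ncycles t j := #|[set X in porbits t | #|X| == j]|.

Lemma porbitsP t X : reflect (exists x, X = porbit t x) (X \in porbits t).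
Proof. by apply: (iffP imsetP) => [[x _ ->]|[x ->]]; exists x. Qed.

Lemma porbit_mem_eq t x y : y \in porbit t x -> porbit t y = porbit t x.
Proof. by move=> xy; apply/eqP; rewrite eq_porbit_mem. Qed.

Lemma porbit_fconnect t x y : (y \in porbit t x) = fconnect t x y.
Proof.
apply/porbitP/idP => [[i ->]|]; first by rewrite permX fconnect_iter.
by rewrite fconnect_orbit => /trajectP [i _ ->]; exists i; rewrite permX.
Qed.

Lemma order_porbit t x : fingraph.order t x = #|porbit t x|.
Proof. by apply: eq_card => y; rewrite /= porbit_fconnect. Qed.

Lemma porbit_fix t x : t x = x -> porbit t x = [set x].
Proof.
move=> tx; apply/setP => y; rewrite inE; apply/porbitP/eqP => [[i ->]|->].
  by rewrite permX_fix.
by exists 0%N; rewrite perm1.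
Qed.

Lemma card_porbit_eq1 t x : (#|porbit t x| == 1%N) = (t x == x).
Proof.
apply/idP/eqP => [/cards1P [y Ey]|/porbit_fix ->]; last by rewrite cards1.
have := porbit_id t x; have := mem_porbit t 1 x.
by rewrite Ey !inE => /eqP -> /eqP.
Qed.

Lemma card_fixed_points t : #|[set x | t x == x]| = ncycles t 1.
Proof.
rewrite /ncycles -(card_in_imset (f := porbit t)); last first.
  by move=> x y; rewrite !inE => /eqP/porbit_fix -> /eqP/porbit_fix -> /set1_inj.
apply: eq_card => X; rewrite inE; apply/imsetP/andP => [[x]|[/porbitsP [x ->]]].
  by rewrite inE -card_porbit_eq1 => tx ->; split; first exact: imset_f.
by rewrite card_porbit_eq1 => tx; exists x; rewrite ?inE.
Qed.

Lemma card_points_in_cycles t j :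
  #|[set x | #|porbit t x| == j]| = (j * ncycles t j)%N.
Proof.
set P := [set X in porbits t | #|X| == j].
have -> : [set x | #|porbit t x| == j] = cover P.
  apply/setP => y; rewrite inE; apply/idP/bigcupP => [yj|[X]].
    by exists (porbit t y); rewrite ?porbit_id // inE imset_f.
  by rewrite inE => /andP [/porbitsP [z ->] /eqP <-] /porbit_mem_eq ->.
have trivP : trivIset P.
  apply/trivIsetP => _ _ /setIdP [/porbitsP [a ->] _] /setIdP [/porbitsP [b ->] _].
  apply: contraR; case/pred0Pn => z /andP [/porbit_mem_eq <- /porbit_mem_eq <-].
  by rewrite eqxx.
have := eq_leqif (leq_card_cover P); rewrite trivP => /eqP ->.
rewrite (eq_bigr (fun _ => j)) => [|X /setIdP [_ /eqP] //].
by rewrite sum_nat_const mulnC.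
Qed.

Lemma porbit_conjg t (g : {perm T}) x : porbit (t ^ g)%g (g x) = g @: porbit t x.
Proof.
have conjX i z : ((t ^ g) ^+ i)%g (g z) = g ((t ^+ i)%g z).
  by rewrite -conjXg permJ.
apply/setP => y; apply/porbitP/imsetP => [[i ->]|[z /porbitP [i ->] ->]].
  by exists ((t ^+ i)%g x); rewrite ?conjX ?mem_porbit.
by exists i; rewrite conjX.
Qed.

Lemma ncycles_conjg t (g : {perm T}) j : ncycles (t ^ g)%g j = ncycles t j.
Proof.
rewrite /ncycles -[RHS](card_imset _ (imset_inj (@perm_inj _ g))).
apply: eq_card => Y; rewrite inE; apply/andP/imsetP => [[/porbitsP [y ->]]|[X]].
  rewrite -[y](permKV g) porbit_conjg card_imset; last exact: perm_inj.
  by move=> tj; exists (porbit t (g^-1 y)%g); rewrite // inE tj imset_f.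
case/setIdP => /porbitsP [x ->] tj ->; rewrite -porbit_conjg imset_f //.
by rewrite porbit_conjg card_imset //; exact: perm_inj.
Qed.

Section Intertwiner.
Variables (t u : {perm T}) (phi : {set T} -> {set T}).
Hypothesis phi_inj : {in porbits t &, injective phi}.
Hypothesis phi_porbits : {in porbits t, forall X, phi X \in porbits u}.
Hypothesis card_phi : {in porbits t, forall X, #|phi X| = #|X|}.

Let r := froot t.
(* The default is never used; it only makes [base] depend on [x] through [r x]. *)
Let base x := odflt (r x) [pick y in phi (porbit t (r x))].
Let g x := iter (findex t (r x) x) u (base x).

Let t_inj : injective t. Proof. exact: perm_inj. Qed.

Let connect_r x : fconnect t (r x) x.
Proof. by rewrite fconnect_sym //; apply: connect_root. Qed.

Let r_iter i x : r (iter i t x) = r x.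
Proof.
by apply/eqP; rewrite eq_sym (root_connect (fconnect_sym t_inj)) fconnect_iter.
Qed.

Let r_r x : r (r x) = r x. Proof. exact: (root_root (fconnect_sym t_inj)). Qed.

Let porbit_r x : porbit t (r x) = porbit t x.
Proof. by apply: porbit_mem_eq; rewrite porbit_fconnect connect_root. Qed.

Let phi_porbit_base x : phi (porbit t (r x)) = porbit u (base x).
Proof.
have tX : porbit t (r x) \in porbits t by apply/porbitsP; exists (r x).
have base_in : base x \in phi (porbit t (r x)).
  rewrite /base; case: pickP => [//|no_y].
  have := card_porbit_neq0 t (r x); rewrite -card_phi //.
  by rewrite (eq_card0 no_y).
have /porbitsP [y Ey] := phi_porbits tX.
by move: base_in; rewrite Ey => /porbit_mem_eq ->.
Qed.

Let order_base x : fingraph.order u (base x) = fingraph.order t (r x).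
Proof.
rewrite !order_porbit -phi_porbit_base card_phi //.
by apply/porbitsP; exists (r x).
Qed.

Let g_iter x i :
  i < fingraph.order t (r x) -> g (iter i t (r x)) = iter i u (base x).
Proof. by move=> lt_i; rewrite /g /base r_iter r_r findex_iter. Qed.

Let g_comm x : g (t x) = u (g x).
Proof.
set i := findex t (r x) x.
have lt_i : i < fingraph.order t (r x) := findex_max (connect_r x).
have tx : t x = iter i.+1 t (r x) by rewrite iterS iter_findex.
have gx : g x = iter i u (base x) by [].
rewrite tx gx -iterS; have [lt_Si|ge_Si] := ltnP i.+1 (fingraph.order t (r x)).
  exact: g_iter.
have eq_Si : i.+1 = fingraph.order t (r x) by apply/eqP; rewrite eqn_leq lt_i.
rewrite eq_Si -{2}order_base !iter_order //; last exact: perm_inj.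
by rewrite -[r x]/(iter 0 t (r x)) g_iter // order_gt0.
Qed.

Let g_inj : injective g.
Proof.
move=> x y eq_g.
have g_porbit z : porbit u (g z) = phi (porbit t z).
  by rewrite -porbit_r phi_porbit_base /g -permX porbit_perm.
have eq_porbit : porbit t x = porbit t y.
  by apply: phi_inj; rewrite ?inE -?g_porbit ?eq_g // imset_f.
have eq_r : r x = r y.
  apply/eqP; rewrite (root_connect (fconnect_sym t_inj)) -porbit_fconnect.
  by rewrite eq_porbit porbit_id.
have lt_x := findex_max (connect_r x); have lt_y := findex_max (connect_r y).
rewrite -order_base in lt_x; rewrite -eq_r -order_base in lt_y.
rewrite -(iter_findex (connect_r x)) -(iter_findex (connect_r y)) -eq_r; congr iter.
move: eq_g; rewrite /g /base -eq_r -/(base x) => eq_g.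
by rewrite -(findex_iter lt_x) eq_g findex_iter.
Qed.

Lemma mem_class_of_porbits_injection : u \in (t ^: [set: {perm T}])%g.
Proof.
suff -> : u = (t ^ perm g_inj)%g by rewrite memJ_class ?inE.
by apply/permP => y; rewrite -[y](permKV (perm g_inj)) permJ !permE g_comm.
Qed.

End Intertwiner.

Lemma class_of_ncycles t u : (forall j, ncycles t j = ncycles u j) ->
  u \in (t ^: [set: {perm T}])%g.
Proof.
move=> eq_ncycles.
have [phi [phi_inj phi_porbits card_phi]] :=
  @weight_preserving_injection _ (fun X => #|X|) (porbits t) (porbits u) eq_ncycles.
exact: (mem_class_of_porbits_injection phi_inj phi_porbits card_phi).
Qed.

End CycleCounts.

Lemma card_setIdU (aT : finType) (A B : {set aT}) (P : pred aT) :
    [disjoint A & B] ->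
  #|[set a in A :|: B | P a]| = #|[set a in A | P a]| + #|[set a in B | P a]|.
Proof.
move=> dAB; rewrite !setIdE setIUl; apply/eqP.
rewrite (eq_leqif (leq_card_setU _ _)).
by apply: disjointW dAB; apply: subsetIl.
Qed.

Lemma card_uniform_family (I aT : finType) (F : I -> {set aT}) m j : injective F ->
    (forall i, #|F i| = m) ->
  #|[set X in [set F i | i : I] | #|X| == j]| = ((j == m) * #|I|)%N.
Proof.
move=> F_inj card_F; case: eqP => [->|ne_j].
  rewrite mul1n -(card_imset _ F_inj); apply: eq_card => X.
  by rewrite !inE andb_idr // => /imsetP [i _ ->]; rewrite card_F.
rewrite mul0n; apply: eq_card0 => X; rewrite !inE.
by apply/andP => [[/imsetP [i _ ->]]]; rewrite card_F => /eqP /esym.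
Qed.

Lemma iter_ordS n (i : 'I_n) m : val (iter m (@ordS n) i) = (i + m) %% n.
Proof.
elim: m => [|m IHm] /=; first by rewrite addn0 modn_small.
by rewrite IHm -addn1 modnDml addn1 addnS.
Qed.

Section Gluing.
Variables (T : finType) (k d' : nat).
Local Notation d := d'.+1.
Local Notation D := ('I_k * 'I_d)%type.
Implicit Types (x : {ffun D -> T}) (t : {perm T}) (y z : T).

Definition block_succ x y : T :=
  if [pick p | x p == y] is Some p then x (p.1, ordS p.2) else y.

Lemma block_succ_x x p : injective x -> block_succ x (x p) = x (p.1, ordS p.2).
Proof.
move=> x_inj; rewrite /block_succ; case: pickP => [p' /eqP /x_inj -> //|no_p].
by have := no_p p; rewrite eqxx.
Qed.

Lemma block_succ_out x y : (forall p, x p != y) -> block_succ x y = y.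
Proof.
move=> out_y; rewrite /block_succ; case: pickP => [p /eqP eq_y|//].
by case/eqP: (out_y p).
Qed.

Lemma block_succ_inj x : injective x -> injective (block_succ x).
Proof.
move=> x_inj y y'.
case: (pickP (fun p => x p == y)) => [[b i] /eqP <-|out_y];
case: (pickP (fun p => x p == y')) => [[b' i'] /eqP <-|out_y'].
- rewrite !block_succ_x // => /x_inj/eqP; rewrite xpair_eqE.
  by case/andP => /= /eqP -> /eqP/ordS_inj ->.
- rewrite block_succ_x // block_succ_out => [/= eq_y|p]; last exact: negbT (out_y' p).
  by move: (out_y' (b, ordS i)); rewrite /= eq_y eqxx.
- rewrite block_succ_x // block_succ_out => [/= eq_y|p]; last exact: negbT (out_y p).
  by move: (out_y (b', ordS i')); rewrite /= eq_y eqxx.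
- by rewrite !block_succ_out // => p; apply: negbT; [apply: out_y' | apply: out_y].
Qed.

(* Junk value [1] when [x] is not injective. *)
Definition block_cycle x : {perm T} :=
  if injectiveP x is ReflectT x_inj then perm (block_succ_inj x_inj) else 1%g.

Lemma block_cycleE x : injective x -> block_cycle x =1 block_succ x.
Proof. by rewrite /block_cycle; case: injectiveP => // x_inj _ y; rewrite permE. Qed.

Variables (t : {perm T}) (x : {ffun D -> T}).
Hypothesis x_inj : injective x.
Hypothesis t_fix : forall p, t (x p) = x p.

Definition glue : {perm T} := (t * block_cycle x)%g.
Definition support := [set x p | p : D].
Definition block b := [set x (b, i) | i : 'I_d].
Definition untouched := [set porbit t y | y in ~: support].

Lemma glue_x p : glue (x p) = x (p.1, ordS p.2).
Proof. by rewrite permM t_fix block_cycleE // block_succ_x. Qed.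

Lemma porbit_untouched y z : y \notin support -> z \in porbit t y -> z \notin support.
Proof.
move=> y_out; apply: contraL => /imsetP [p _ ->].
rewrite porbit_sym porbit_fix // inE; apply: contraNneq y_out => ->.
exact: imset_f.
Qed.

Lemma glue_out y : y \notin support -> glue y = t y.
Proof.
move=> y_out; rewrite permM block_cycleE // block_succ_out // => p.
apply: contraNneq (porbit_untouched y_out (mem_porbit t 1 y)) => <-.
exact: imset_f.
Qed.

Lemma porbit_glue_out y : y \notin support -> porbit glue y = porbit t y.
Proof.
move=> y_out.
have glueX i : (glue ^+ i)%g y = (t ^+ i)%g y.
  elim: i => [|i IHi]; first by rewrite !expg0.
  rewrite !expgSr (permM (glue ^+ i)) (permM (t ^+ i)) IHi glue_out //.
  exact: porbit_untouched y_out (mem_porbit _ _ _).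
by apply/setP => z; apply/porbitP/porbitP => [] [i ->]; exists i.
Qed.

Lemma glue_iter b i m : (glue ^+ m)%g (x (b, i)) = x (b, iter m (@ordS d) i).
Proof. by elim: m => [|m IHm]; rewrite ?expg0 ?perm1 // expgSr permM IHm glue_x. Qed.

Lemma glue_pow_ord0 b (i : 'I_d) : (glue ^+ i)%g (x (b, ord0)) = x (b, i).
Proof.
rewrite glue_iter; suff -> : iter i (@ordS d) ord0 = i by [].
by apply: val_inj; rewrite iter_ordS add0n modn_small.
Qed.

Lemma porbit_glue_x b i : porbit glue (x (b, i)) = block b.
Proof.
rewrite -glue_pow_ord0 porbit_perm; apply/setP => z.
apply/porbitP/imsetP => [[m ->]|[j _ ->]]; first by rewrite glue_iter; eexists.
by exists j; rewrite glue_pow_ord0.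
Qed.

Lemma card_block b : #|block b| = d.
Proof. by rewrite card_imset ?card_ord // => i i' /x_inj []. Qed.

Lemma block_inj : injective block.
Proof.
move=> b b' eq_b.
have : x (b, ord0) \in block b' by rewrite -eq_b; apply/imsetP; exists ord0.
by case/imsetP => i _ /x_inj [].
Qed.

Lemma disjoint_untouched (I : finType) (F : I -> {set T}) :
  (forall i, exists p, x p \in F i) -> [disjoint untouched & [set F i | i : I]].
Proof.
move=> meets_support; rewrite -setI_eq0; apply/eqP/setP => X; rewrite !inE.
apply/andP => -[/imsetP [y]]; rewrite inE => y_out -> /imsetP [i _ eq_F].
have [p] := meets_support i; rewrite -eq_F => /(porbit_untouched y_out).
by rewrite imset_f.
Qed.

Lemma porbits_glue : porbits glue = untouched :|: [set block b | b : 'I_k].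
Proof.
apply/setP => X; rewrite inE; apply/porbitsP/orP => [[y ->]|[]].
- have [/imsetP [[b i] _ ->]|y_out] := boolP (y \in support).
    by right; rewrite porbit_glue_x imset_f.
  by left; rewrite porbit_glue_out // imset_f // inE.
- by case/imsetP => y; rewrite inE => y_out ->; exists y; rewrite porbit_glue_out.
- by case/imsetP => b _ ->; exists (x (b, ord0)); rewrite porbit_glue_x.
Qed.

Lemma porbits_fixing : porbits t = untouched :|: [set [set x p] | p : D].
Proof.
apply/setP => X; rewrite inE; apply/porbitsP/orP => [[y ->]|[]].
- have [/imsetP [p _ ->]|y_out] := boolP (y \in support).
    by right; rewrite porbit_fix // imset_f.
  by left; rewrite imset_f // inE.
- by case/imsetP => y _ ->; exists y.
- by case/imsetP => p _ ->; exists (x p); rewrite porbit_fix.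
Qed.

Lemma ncycles_glue j :
  ncycles glue j + (j == 1) * (k * d) = ncycles t j + (j == d) * k.
Proof.
have singleton_inj : injective (fun p : D => [set x p]) by move=> p p' /set1_inj /x_inj.
rewrite /ncycles porbits_glue porbits_fixing !card_setIdU; first last.
- by apply: disjoint_untouched => b; exists (b, ord0); apply/imsetP; exists ord0.
- by apply: disjoint_untouched => p; exists p; rewrite inE.
rewrite (card_uniform_family _ block_inj card_block).
rewrite (card_uniform_family _ singleton_inj (fun p => cards1 (x p))).
by rewrite card_prod !card_ord addnAC.
Qed.

End Gluing.

Lemma card_dep_pairs (aT bT : finType) (A : {set aT}) (B : aT -> {set bT}) m :
    (forall a, a \in A -> #|B a| = m) ->
  #|[set p : aT * bT | p.1 \in A & p.2 \in B p.1]| = (#|A| * m)%N.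
Proof.
move=> card_B; rewrite -sum1_card -sum_nat_const.
rewrite (eq_bigl (fun p => (p.1 \in A) && (p.2 \in B p.1))); last first.
  by move=> p; rewrite inE.
rewrite -(pair_big_dep (mem A) (fun a b => b \in B a) (fun _ _ => 1%N)) /=.
by apply: eq_bigr => a Aa; rewrite sum1_card card_B.
Qed.

Definition fixed_embeddings (I T : finType) (t : {perm T}) :=
  [set x : {ffun I -> T} | injectiveb x && [forall i, t (x i) == x i]].

Lemma card_fixed_embeddings (I T : finType) (t : {perm T}) :
  #|fixed_embeddings I t| = (ncycles t 1) ^_ #|I|.
Proof.
rewrite -card_fixed_points -card_inj_ffuns_on; apply: eq_card => x.
rewrite !inE andbC; congr (_ && _).
by apply/forallP/ffun_onP => fix_x i; move: (fix_x i); rewrite inE.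
Qed.

Section DoubleCounting.
Variables (T : finType) (k d' : nat) (s s' : {perm T}).
Local Notation d := d'.+1.
Local Notation D := ('I_k * 'I_d)%type.
Hypothesis ncycles_shift :
  forall j, ncycles s' j + (j == 1) * (k * d) = ncycles s j + (j == d) * k.

Local Notation C := (s ^: [set: {perm T}])%g.
Local Notation C' := (s' ^: [set: {perm T}])%g.

Definition marked_d_cycles (u : {perm T}) :=
  [set y : {ffun 'I_k -> T} | y \in ffun_on [set z | #|porbit u z| == d]].

Definition glue_mark (tx : {perm T} * {ffun D -> T}) :=
  (glue tx.1 tx.2, [ffun b => tx.2 (b, ord0)]).

Let P := [set tx | tx.1 \in C & tx.2 \in fixed_embeddings D tx.1].
Let Q := [set uy | uy.1 \in C' & uy.2 \in marked_d_cycles uy.1].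

Let fixed_embeddingsP (t : {perm T}) (x : {ffun D -> T}) :
  x \in fixed_embeddings D t ->
  injective x /\ forall p, t (x p) = x p.
Proof.
by rewrite inE => /andP [/injectiveP x_inj /forallP fix_x]; split=> // p; apply/eqP.
Qed.

Let glue_mem_class t x : t \in C -> x \in fixed_embeddings D t -> glue t x \in C'.
Proof.
case/imsetP => g _ -> /fixed_embeddingsP [x_inj fix_x].
apply: class_of_ncycles => j; apply: (@addIn ((j == 1) * (k * d))).
by rewrite ncycles_shift ncycles_glue // ncycles_conjg.
Qed.

Let glue_mark_inj : {in P &, injective glue_mark}.
Proof.
move=> [t x] [t' x'] /setIdP [_ /fixed_embeddingsP [x_inj fix_x]].
move=> /setIdP [_ /fixed_embeddingsP [x'_inj fix_x']] [/= eq_glue eq_mark].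
have eq_x : x = x'.
  apply/ffunP => -[b i].
  rewrite -(glue_pow_ord0 x_inj fix_x) -(glue_pow_ord0 x'_inj fix_x') eq_glue.
  by move/ffunP: eq_mark => /(_ b); rewrite !ffunE => ->.
by move: eq_glue; rewrite eq_x => /mulIg ->.
Qed.

Let glue_mark_in : {in P, forall tx, glue_mark tx \in Q}.
Proof.
move=> [t x] /setIdP [/= tC xE]; rewrite !inE /= glue_mem_class //.
have [x_inj fix_x] := fixed_embeddingsP xE.
by apply/ffun_onP => b; rewrite ffunE inE porbit_glue_x // card_block.
Qed.

Lemma card_class_mul_ffact_le :
  (#|C| * (ncycles s 1) ^_ (k * d) <= #|C'| * (d * ncycles s' d) ^ k)%N.
Proof.
have card_P : #|P| = (#|C| * (ncycles s 1) ^_ (k * d))%N.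
  apply: card_dep_pairs => _ /imsetP [g _ ->].
  by rewrite card_fixed_embeddings ncycles_conjg card_prod !card_ord.
have card_Q : #|Q| = (#|C'| * (d * ncycles s' d) ^ k)%N.
  apply: card_dep_pairs => _ /imsetP [g _ ->].
  by rewrite cardsE card_ffun_on card_ord card_points_in_cycles ncycles_conjg.
rewrite -card_P -card_Q -(card_in_imset glue_mark_inj); apply: subset_leq_card.
by apply/subsetP => _ /imsetP [tx Ptx ->]; exact: glue_mark_in.
Qed.

End DoubleCounting.

Lemma expn_le_ffact_addn a m : a ^ m <= (a + m) ^_ m.
Proof.
elim: m => [|m IHm] //; rewrite ffactnS addnS expnS /=.
by apply: leq_mul => //; lia.
Qed.

Lemma expn_le_ffact c m : 2 * m <= c -> m ^ m <= c ^_ m.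
Proof.
move=> le_2m_c; have -> : c = (c - m) + m by lia.
apply: leq_trans (expn_le_ffact_addn _ _).
by case: m le_2m_c => [//|m] ?; rewrite leq_exp2r //; lia.
Qed.

Local Open Scope ring_scope.

Theorem lemma5p6 (n d k : nat) (s s' : 'S_n) :
  (2 <= d)%N -> (d <= n)%N -> (1 <= k)%N ->
  (2 * k * d <= cyc_count s 1)%N ->
  cyc_count s' 1 = (cyc_count s 1 - k * d)%N ->
  cyc_count s' d = (cyc_count s d + k)%N ->
  (forall j, j != 1%N -> j != d -> cyc_count s' j = cyc_count s j) ->
  let C := (s ^: [set: 'S_n])%g in
  let C' := (s' ^: [set: 'S_n])%g in
  (#|C|%:R / #|C'|%:R : rat)
    <= ((cyc_count s d + k) ^ k * d ^ k)%N%:R / ((k * d) ^ (k * d))%N%:R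
  /\ ((cyc_count s d + k) ^ k * d ^ k)%N%:R / ((k * d) ^ (k * d))%N%:R
    <= (n%:R / ((k * d) ^ d)%N%:R : rat) ^+ k.
Proof.
move=> d_ge2 _ k_gt0 many_fixed ncycles_s'1 ncycles_s'd ncycles_s'j C C'.
rewrite /cyc_count -!/(ncycles _ _) in many_fixed ncycles_s'1 ncycles_s'd ncycles_s'j *.
case: d => [//|d'] in d_ge2 many_fixed ncycles_s'1 ncycles_s'd ncycles_s'j *.
set d := d'.+1 in d_ge2 many_fixed ncycles_s'1 ncycles_s'd ncycles_s'j *.
have shift j : (ncycles s' j + (j == 1) * (k * d) = ncycles s j + (j == d) * k)%N.
  have [->|ne_j1] := eqVneq j 1%N.
    by rewrite ncycles_s'1 ltn_eqF // mul1n mul0n addn0 subnK //; lia.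
  have [->|ne_jd] := eqVneq j d; first by rewrite ncycles_s'd mul0n mul1n addn0.
  by rewrite !mul0n !addn0; apply: ncycles_s'j.
have count := card_class_mul_ffact_le shift.
have fixed_ffact : ((k * d) ^ (k * d) <= (ncycles s 1) ^_ (k * d))%N.
  by apply: expn_le_ffact; rewrite mulnA.
have d_cycles_le_n : (d * ncycles s' d <= n)%N.
  by rewrite -card_points_in_cycles (leq_trans (max_card _)) ?card_ord.
have C'_gt0 : (0 < #|C'|)%N by apply/card_gt0P; exists s'; exact: class_refl.
have kd_gt0 : (0 < (k * d) ^ (k * d))%N by rewrite expn_gt0 muln_gt0 k_gt0.
split.
  rewrite ler_pdivrMr ?ltr0n // mulrAC ler_pdivlMr ?ltr0n // -!natrM ler_nat.
  apply: leq_trans (leq_mul (leqnn _) fixed_ffact) _.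
  by rewrite (leq_trans count) // -ncycles_s'd mulnC expnMn (mulnC (d ^ k)%N).
rewrite expr_div_n -!natrX -expnM (mulnC d k).
apply: ler_wpM2r; first by rewrite invr_ge0 ler0n.
by rewrite ler_nat -expnMn leq_exp2r // mulnC -ncycles_s'd.
Qed.
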